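(* For any continuous function $f:\mathrm{SO}(3)\to\mathbb{R}^3$, there exists a rotation $R\in\mathrm{SO}(3)$ such that $d(R,\mathbf{R}_{xyz}(f(R)))=\pi$.
   Context: Unit quaternions $w+x\mathbf{i}+y\mathbf{j}+z\mathbf{k}$ are identified with $(w,x,y,z)\in S^3$. $\mathbf{R}_Q:S^3\to\mathrm{SO}(3)$ is the standard conversion $$\mathbf{R}_Q(w,x,y,z)=\begin{bmatrix}1-2y^2-2z^2 & 2(xy-zw) & 2(xz+yw)\\ 2(xy+zw) & 1-2x^2-2z^2 & 2(yz-xw)\\ 2(xz-yw) & 2(yz+xw) & 1-2x^2-2y^2\end{bmatrix}.$$ Extrinsic $x$-$y$-$z$ Euler angles: $\mathbf{Q}_{xyz}(\alpha,\beta,\gamma)=(\cos\frac{\gamma}{2}+\mathbf{k}\sin\frac{\gamma}{2})(\cos\frac{\beta}{2}+\mathbf{j}\sin\frac{\beta}{2})(\cos\frac{\alpha}{2}+\mathbf{i}\sin\frac{\alpha}{2})$ (quaternion product) and $\mathbf{R}_{xyz}(\alpha,\beta,\gamma)=\mathbf{R}_Q(\mathbf{Q}_{xyz}(\alpha,\beta,\gamma))$. For $R_1,R_2\in\mathrm{SO}(3)$, $d(R_1,R_2)=\cos^{-1}\frac{\mathrm{tr}(R_2R_1^{-1})-1}{2}$ is the angle of the rotation $R_2R_1^{-1}$. *)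

From HB Require Import structures.
From mathcomp Require Import all_boot all_order all_algebra.
From mathcomp Require Import all_classical all_reals all_analysis.
Set Implicit Arguments. Unset Strict Implicit. Unset Printing Implicit Defensive.
Import Order.TTheory GRing.Theory Num.Theory.
Import numFieldNormedType.Exports.
Local Open Scope ring_scope.
Local Open Scope classical_set_scope.

Section Defs.
Variable R : realType.

(* Unit quaternions w + x i + y j + z k as 4-tuples (w,x,y,z). *)
Definition quat := (R * R * R * R)%type.

Definition qmul (p q : quat) : quat :=
  let: (a1, b1, c1, d1) := p in
  let: (a2, b2, c2, d2) := q in
  (a1*a2 - b1*b2 - c1*c2 - d1*d2,
   a1*b2 + b1*a2 + c1*d2 - d1*c2,
   a1*c2 - b1*d2 + c1*a2 + d1*b2,
   a1*d2 + b1*c2 - c1*b2 + d1*a2).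

Definition mx3 (a b c d e f g h i : R) : 'M[R]_3 :=
  \matrix_(r < 3, s < 3)
    nth 0 (nth [::] [:: [:: a; b; c]; [:: d; e; f]; [:: g; h; i]] r) s.

Definition RQ (q : quat) : 'M[R]_3 :=
  let: (w, x, y, z) := q in
  mx3 (1 - 2*y^+2 - 2*z^+2) (2*(x*y - z*w))       (2*(x*z + y*w))
      (2*(x*y + z*w))       (1 - 2*x^+2 - 2*z^+2) (2*(y*z - x*w))
      (2*(x*z - y*w))       (2*(y*z + x*w))       (1 - 2*x^+2 - 2*y^+2).

(* Extrinsic x-y-z Euler angles. *)
Definition Qxyz (al be ga : R) : quat :=
  qmul (qmul (cos (ga/2), 0, 0, sin (ga/2))
             (cos (be/2), 0, sin (be/2), 0))
       (cos (al/2), sin (al/2), 0, 0).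

Definition Rxyz (al be ga : R) : 'M[R]_3 := RQ (Qxyz al be ga).

Definition SO3 : set 'M[R]_3 :=
  [set M | M^T *m M = 1%:M /\ \det M = 1].

Definition rotdist (R1 R2 : 'M[R]_3) : R :=
  acos ((\tr (R2 *m invmx R1) - 1) / 2).

End Defs.

From HB Require Import structures.
From mathcomp Require Import all_boot all_order all_algebra.
From mathcomp Require Import all_classical all_reals all_analysis.
From mathcomp Require Import ring.
Import Order.TTheory GRing.Theory Num.Theory.
Import numFieldNormedType.Exports.
Set Implicit Arguments. Unset Strict Implicit. Unset Printing Implicit Defensive.
Local Open Scope ring_scope.
Local Open Scope classical_set_scope.

(* The rotations [zloop u = RQ (cos u, 0, 0, sin u)], [0 <= u <= pi], about the
   z-axis form a closed loop in SO(3) whose quaternion lift runs from [1] to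
   [-1]. Along it, the Euler-angle quaternion [q u = Qxyz (f (zloop u))] takes
   the same value at both ends, so [u |-> <q u, (cos u, 0, 0, sin u)>] changes
   sign and has a zero [c]. As [tr (RQ q * RQ p^T) = 4 <q, p>^2 - 1] for unit
   quaternions, orthogonal quaternions give rotations at angle [pi]; hence
   [M = zloop c] works. *)

Section QuaternionRotations.
Variable R : realType.
Implicit Types (p q : quat R) (M : 'M[R]_3).

Lemma det_mx3 (a b c d e f g h k : R) : \det (mx3 a b c d e f g h k) =
  a * (e * k - f * h) - b * (d * k - f * g) + c * (d * h - e * g).
Proof.
rewrite (expand_det_row _ ord0) !big_ord_recr big_ord0 /= /cofactor.
rewrite !(expand_det_row _ ord0) !big_ord_recr !big_ord0 /= /cofactor.
by rewrite !det_mx11 !mxE /=; ring.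
Qed.

Lemma mxtrace_mulmx_tr_mx3 (a b c d e f g h k a' b' c' d' e' f' g' h' k' : R) :
  \tr (mx3 a b c d e f g h k *m (mx3 a' b' c' d' e' f' g' h' k')^T) =
  a*a' + b*b' + c*c' + d*d' + e*e' + f*f' + g*g' + h*h' + k*k'.
Proof.
rewrite /mxtrace !big_ord_recr big_ord0 /=.
by rewrite !mxE !big_ord_recr !big_ord0 /= !mxE /=; ring.
Qed.

Definition qnorm2 q : R :=
  let: (w, x, y, z) := q in w^+2 + x^+2 + y^+2 + z^+2.

Definition qdot p q : R :=
  let: (a, b, c, d) := p in let: (a', b', c', d') := q in
  a*a' + b*b' + c*c' + d*d'.

Lemma qnorm2_qmul p q : qnorm2 (qmul p q) = qnorm2 p * qnorm2 q.
Proof. by case: p q => [[[w x] y] z] [[[w' x'] y'] z'] /=; ring. Qed.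

Lemma qnorm2_Qxyz (a b c : R) : qnorm2 (Qxyz a b c) = 1.
Proof.
by rewrite /Qxyz !qnorm2_qmul /= !expr0n /= !addr0 !cos2Dsin2 !mulr1.
Qed.

(* Replacing each [1] in [RQ] by the squared norm turns the identities below
   into polynomial identities, provable by [ring]. *)
Definition RQ_hom q : 'M[R]_3 :=
  let: (w, x, y, z) := q in
  let n := w^+2 + x^+2 + y^+2 + z^+2 in
  mx3 (n - 2*y^+2 - 2*z^+2) (2*(x*y - z*w))       (2*(x*z + y*w))
      (2*(x*y + z*w))       (n - 2*x^+2 - 2*z^+2) (2*(y*z - x*w))
      (2*(x*z - y*w))       (2*(y*z + x*w))       (n - 2*x^+2 - 2*y^+2).

Lemma RQ_homE q : qnorm2 q = 1 -> RQ q = RQ_hom q.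
Proof. by case: q => [[[w x] y] z] /= ->. Qed.

Lemma RQ_hom_orthogonal q : (RQ_hom q)^T *m RQ_hom q = (qnorm2 q ^+ 2)%:M.
Proof.
case: q => [[[w x] y] z]; apply/matrixP => i j.
rewrite !mxE !big_ord_recr big_ord0 /= !mxE.
by case: i j => [[|[|[|i]]] Hi] [[|[|[|j]]] Hj] //=; ring.
Qed.

Lemma det_RQ_hom q : \det (RQ_hom q) = qnorm2 q ^+ 3.
Proof. by case: q => [[[w x] y] z]; rewrite /= det_mx3; ring. Qed.

Lemma RQ_SO3 q : qnorm2 q = 1 -> SO3 (RQ q).
Proof.
move=> q1; rewrite RQ_homE //.
by split; rewrite ?RQ_hom_orthogonal ?det_RQ_hom q1 expr1n.
Qed.

Lemma mxtrace_RQ p q : qnorm2 p = 1 -> qnorm2 q = 1 ->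
  \tr (RQ q *m (RQ p)^T) = 4 * qdot q p ^+ 2 - 1.
Proof.
move=> p1 q1; rewrite !RQ_homE //.
transitivity (4 * qdot q p ^+ 2 - qnorm2 q * qnorm2 p); last by rewrite p1 q1 mulr1.
case: q p {p1 q1} => [[[w x] y] z] [[[w' x'] y'] z'].
by rewrite /= mxtrace_mulmx_tr_mx3; ring.
Qed.

Lemma invmx_SO3 M : SO3 M -> invmx M = M^T.
Proof.
case=> /mulmx1C MMt _; have [Mu _] := mulmx1_unit MMt.
by rewrite -[RHS]mul1mx -(mulVmx Mu) -mulmxA MMt mulmx1.
Qed.

Lemma rotdist_RQ_qdot0 p q : qnorm2 p = 1 -> qnorm2 q = 1 -> qdot q p = 0 ->
  rotdist (RQ p) (RQ q) = pi.
Proof.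
move=> p1 q1 qp0; rewrite /rotdist invmx_SO3; last exact: RQ_SO3.
rewrite mxtrace_RQ // qp0.
have -> : (4 * 0 ^+ 2 - 1 - 1) / 2 = -1 :> R by field.
exact: acosN1.
Qed.

End QuaternionRotations.

Section Convergence.
Context {T : Type} (F : set_system T) {FF : Filter F}.

Lemma cvgX {K : numFieldType} (g : T -> K) (l : K) n :
  g @ F --> l -> g t ^+ n @[t --> F] --> l ^+ n.
Proof.
move=> gl; elim: n => [|n IHn].
  by under eq_fun do rewrite expr0; rewrite expr0; exact: cvg_cst.
by under eq_fun do rewrite exprS; rewrite exprS; exact: cvgM.
Qed.

Lemma cvg_mx {U : puniformType} m n (M : T -> 'M[U]_(m, n)) (L : 'M[U]_(m, n)) :
  (forall i j, M t i j @[t --> F] --> L i j) -> M @ F --> L.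
Proof.
move=> ML; apply/cvg_mx_entourageP => A entA.
apply: filter_forall => i; apply: filter_forall => j.
near=> t; rewrite inE; near: t; exact: (cvg_entourageP _ _).1 (ML i j) A entA.
Unshelve. all: by end_near.
Qed.

Variable R : realType.

Lemma cvg_cos (g : T -> R) (l : R) : g @ F --> l -> cos (g t) @[t --> F] --> cos l.
Proof. by move=> gl; exact: (cvg_comp _ _ gl (@continuous_cos R l)). Qed.

Lemma cvg_sin (g : T -> R) (l : R) : g @ F --> l -> sin (g t) @[t --> F] --> sin l.
Proof. by move=> gl; exact: (cvg_comp _ _ gl (@continuous_sin R l)). Qed.

Lemma cvg_mx3 (a b c d e f g h k : T -> R) (a' b' c' d' e' f' g' h' k' : R) :
  a @ F --> a' -> b @ F --> b' -> c @ F --> c' ->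
  d @ F --> d' -> e @ F --> e' -> f @ F --> f' ->
  g @ F --> g' -> h @ F --> h' -> k @ F --> k' ->
  mx3 (a t) (b t) (c t) (d t) (e t) (f t) (g t) (h t) (k t) @[t --> F] -->
  mx3 a' b' c' d' e' f' g' h' k'.
Proof.
move=> *; apply: cvg_mx => i j; rewrite mxE; under eq_fun do rewrite mxE.
by case: i j => [[|[|[|i]]] Hi] [[|[|[|j]]] Hj].
Qed.

End Convergence.

(* Dispatching on the syntactic head matters: a failing [apply: cvgD] on, say,
   a numeral or [cos] would unfold it and take very long to fail. *)
Ltac cvg_poly := repeat lazymatch goal with
  | |- (fun _ => ?c) @ _ --> _ => apply: cvg_cst
  | |- (fun t => @?a t + @?b t) @ _ --> _ => apply: cvgD
  | |- (fun t => @?a t * @?b t) @ _ --> _ => apply: cvgM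
  | |- (fun t => - @?a t) @ _ --> _ => apply: cvgN
  | |- (fun t => @?a t ^+ _) @ _ --> _ => apply: cvgX
  | |- (fun t => cos (@?a t)) @ _ --> _ => apply: cvg_cos
  | |- (fun t => sin (@?a t)) @ _ --> _ => apply: cvg_sin
  | |- cos @ _ --> _ => apply: cvg_cos
  | |- sin @ _ --> _ => apply: cvg_sin
  | |- (fun t => mx3 _ _ _ _ _ _ _ _ _) @ _ --> _ => apply: cvg_mx3
  | |- (fun t => t) @ _ --> _ => apply: cvg_id
  end.

Lemma continuous_within_comp {T U V : topologicalType} (A : set U)
    (f : U -> V) (g : T -> U) :
  {within A, continuous f} -> continuous g -> (forall t, A (g t)) ->
  continuous (f \o g).
Proof.
move=> cf cg Ag t; apply: cvg_comp ((subspace_continuousP A f).1 cf _ (Ag t)).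
move=> W /cg; rewrite !nbhs_simpl /=; apply: filterS => s; apply; exact: Ag.
Qed.

Lemma IVT_antipodal {R : realType} (g : R -> R) (a b : R) :
  a <= b -> {within `[a, b], continuous g} -> g b = - g a ->
  exists2 c, c \in `[a, b]%R & g c = 0.
Proof.
move=> ab cg gba; apply: (IVT ab cg); rewrite gba ge_min le_max oppr_le0 oppr_ge0.
by case/orP: (le_total 0 (g a)) => ->; rewrite ?orbT.
Qed.

Section ZLoop.
Variable R : realType.

Definition zquat (u : R) : quat R := (cos u, 0, 0, sin u).

Definition zloop (u : R) : 'M[R]_3 := RQ (zquat u).

Lemma qnorm2_zquat u : qnorm2 (zquat u) = 1.
Proof. by rewrite /= expr0n /= !addr0 cos2Dsin2. Qed.

Lemma zloop_SO3 u : SO3 (zloop u).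
Proof. exact/RQ_SO3/qnorm2_zquat. Qed.

Lemma zloop_pi : zloop pi = zloop 0.
Proof. by rewrite /zloop /zquat cospi sinpi cos0 sin0 /=; congr mx3; ring. Qed.

Lemma continuous_zloop : continuous zloop.
Proof. by move=> u; rewrite /continuous_at /zloop /zquat /RQ /=; cvg_poly. Qed.

End ZLoop.

Theorem corollary2 (R : realType) (f : 'M[R]_3 -> 'rV[R]_3) :
  {within @SO3 R, continuous f} ->
  exists M : 'M[R]_3, @SO3 R M /\
    rotdist M (Rxyz (f M ord0 0) (f M ord0 1) (f M ord0 2)) = pi.
Proof.
move=> cf.
pose angle k u := f (zloop u) ord0 k.
have cangle k : continuous (angle k).
  have cfz := continuous_within_comp cf (@continuous_zloop R) (@zloop_SO3 R).
  by move=> u; exact: continuous_comp (cfz u) (@coord_continuous R 1 3 ord0 k _).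
pose phi u := qdot (Qxyz (angle 0 u) (angle 1 u) (angle 2 u)) (zquat u).
have cphi : continuous phi.
  by move=> u; rewrite /continuous_at /phi /Qxyz /zquat /=; cvg_poly; exact: cangle.
have phi_pi : phi pi = - phi 0.
  rewrite /phi /angle zloop_pi /zquat cospi sinpi cos0 sin0.
  by case: (Qxyz _ _ _) => [[[a b] c] d] /=; ring.
have [c _ phic0] : exists2 c, c \in `[0, pi]%R & phi c = 0.
  by apply: IVT_antipodal (pi_ge0 R) _ phi_pi; exact: continuous_subspaceT.
exists (zloop c); split; first exact: zloop_SO3.
exact: rotdist_RQ_qdot0 (qnorm2_zquat c) (qnorm2_Qxyz _ _ _) phic0.
Qed.
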